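(* Every asymptotically uniformly smooth Banach space $X$ has the alternating Banach-Saks property. In particular, if $X$ is also reflexive, then $X$ has the Banach-Saks property.
   Context: The modulus of asymptotic uniform smoothness of $X$ is $\overline{\rho}_X(t)=\sup_{x\in\partial B_X}\inf_{\dim(X/E)<\infty}\sup_{h\in\partial B_E}\|x+th\|-1$ ($E$ closed finite-codimensional subspaces, $\partial B$ the unit sphere); $X$ is asymptotically uniformly smooth if $\lim_{t\to0^+}\overline\rho_X(t)/t=0$. $X$ has the Banach-Saks property if every bounded sequence $(x_n)$ has a subsequence $(x_{n_j})$ with $(\frac1k\sum_{j=1}^kx_{n_j})_k$ norm convergent; it has the alternating Banach-Saks property if every bounded sequence has a subsequence $(x_{n_j})$ and signs $\varepsilon_j\in\{-1,1\}$ with $(\frac1k\sum_{j=1}^k\varepsilon_jx_{n_j})_k$ norm convergent. *)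

From Stdlib Require Import Reals Lra.
Open Scope R_scope.

Record NormedSpace := {
  V :> Type;
  vzero : V;
  vadd : V -> V -> V;
  vopp : V -> V;
  vscal : R -> V -> V;
  vnorm : V -> R;
  vadd_assoc : forall x y z, vadd x (vadd y z) = vadd (vadd x y) z;
  vadd_comm : forall x y, vadd x y = vadd y x;
  vadd_0 : forall x, vadd x vzero = x;
  vadd_opp : forall x, vadd x (vopp x) = vzero;
  vscal_assoc : forall a b x, vscal a (vscal b x) = vscal (a * b) x;
  vscal_1 : forall x, vscal 1 x = x;
  vscal_distr_l : forall a x y, vscal a (vadd x y) = vadd (vscal a x) (vscal a y);
  vscal_distr_r : forall a b x, vscal (a + b) x = vadd (vscal a x) (vscal b x);
  vnorm_nonneg : forall x, 0 <= vnorm x;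
  vnorm_eq0 : forall x, vnorm x = 0 -> x = vzero;
  vnorm_scal : forall a x, vnorm (vscal a x) = Rabs a * vnorm x;
  vnorm_triangle : forall x y, vnorm (vadd x y) <= vnorm x + vnorm y
}.

Arguments vzero {n}.
Arguments vadd {n}.
Arguments vopp {n}.
Arguments vscal {n}.
Arguments vnorm {n}.

Definition vsub {X : NormedSpace} (x y : X) : X := vadd x (vopp y).

Definition vconverges_to {X : NormedSpace} (u : nat -> X) (y : X) : Prop :=
  forall eps, 0 < eps -> exists N : nat, forall k, (N <= k)%nat -> vnorm (vsub (u k) y) < eps.

Definition vconvergent {X : NormedSpace} (u : nat -> X) : Prop :=
  exists y, vconverges_to u y.

Definition vCauchy {X : NormedSpace} (u : nat -> X) : Prop :=
  forall eps, 0 < eps -> exists N : nat, forall m n, (N <= m)%nat -> (N <= n)%nat ->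
    vnorm (vsub (u m) (u n)) < eps.

Definition complete (X : NormedSpace) : Prop :=
  forall u : nat -> X, vCauchy u -> vconvergent u.

Record BanachSpace := {
  bspace :> NormedSpace;
  bcomplete : complete bspace
}.

Fixpoint vsum {X : NormedSpace} (f : nat -> X) (k : nat) : X :=
  match k with
  | O => vzero
  | S k' => vadd (vsum f k') (f k')
  end.

Definition cesaro {X : NormedSpace} (f : nat -> X) (k : nat) : X :=
  vscal (/ INR k) (vsum f k).

Definition bounded_seq {X : NormedSpace} (u : nat -> X) : Prop :=
  exists M, forall n, vnorm (u n) <= M.

Definition strictly_increasing (phi : nat -> nat) : Prop :=
  forall i j, (i < j)%nat -> (phi i < phi j)%nat.

Definition banach_saks (X : NormedSpace) : Prop :=
  forall u : nat -> X, bounded_seq u ->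
    exists phi, strictly_increasing phi /\ vconvergent (cesaro (fun j => u (phi j))).

Definition alternating_banach_saks (X : NormedSpace) : Prop :=
  forall u : nat -> X, bounded_seq u ->
    exists (phi : nat -> nat) (s : nat -> R), strictly_increasing phi /\
      (forall j, s j = 1 \/ s j = -1) /\
      vconvergent (cesaro (fun j => vscal (s j) (u (phi j)))).

(** Closed subspaces of finite codimension: E is a linear subspace, closed
    under norm limits, and X/E is finite-dimensional, i.e. there are finitely
    many vectors v_0..v_{n-1} with X = E + span(v_0..v_{n-1}). *)
Definition linear_subspace {X : NormedSpace} (E : X -> Prop) : Prop :=
  E vzero /\ (forall x y, E x -> E y -> E (vadd x y)) /\
  (forall a x, E x -> E (vscal a x)).

Definition closed_set {X : NormedSpace} (E : X -> Prop) : Prop :=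
  forall (u : nat -> X) y, (forall n, E (u n)) -> vconverges_to u y -> E y.

Definition finite_codim {X : NormedSpace} (E : X -> Prop) : Prop :=
  exists (n : nat) (v : nat -> X), forall x : X,
    exists (e : X) (c : nat -> R), E e /\
      x = vadd e (vsum (fun i => vscal (c i) (v i)) n).

Definition closed_fin_codim {X : NormedSpace} (E : X -> Prop) : Prop :=
  linear_subspace E /\ closed_set E /\ finite_codim E.

(** [modulus_le X t c] unfolds  rho_X(t) <= c, where
    rho_X(t) = sup_{||x||=1} inf_{E} sup_{h in E, ||h||=1} ||x + t h|| - 1.
    (sup_x A(x) <= c  iff  A(x) <= c for all x;  inf_E B(E) <= c  iff  for
    every c' > c some E has B(E) <= c';  sup_h C(h) <= c' iff C(h) <= c' for all h.) *)
Definition modulus_le (X : NormedSpace) (t c : R) : Prop :=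
  forall x : X, vnorm x = 1 ->
    forall c', c < c' ->
      exists E : X -> Prop, closed_fin_codim E /\
        forall h : X, E h -> vnorm h = 1 -> vnorm (vadd x (vscal t h)) - 1 <= c'.

(** Asymptotic uniform smoothness:  lim_{t -> 0+} rho_X(t)/t = 0, i.e.
    for every eps > 0 there is delta > 0 with rho_X(t) <= eps t for all
    0 < t < delta.  The lower bound is automatic since rho_X >= 0 for
    infinite-dimensional X. *)
Definition asymptotically_uniformly_smooth (X : NormedSpace) : Prop :=
  forall eps, 0 < eps -> exists delta, 0 < delta /\
    forall t, 0 < t -> t < delta ->
      modulus_le X t (eps * t).

Definition in_dual {X : NormedSpace} (f : X -> R) : Prop :=
  (forall x y, f (vadd x y) = f x + f y) /\
  (forall a x, f (vscal a x) = a * f x) /\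
  (exists M, forall x, Rabs (f x) <= M * vnorm x).

(** Reflexivity: the canonical embedding X -> X** is onto.  A functional
    Phi on X* is linear on X* and bounded, |Phi f| <= C ||f||_*, where
    ||f||_* = inf { M >= 0 | forall x, |f x| <= M ||x|| }. *)
Definition reflexive (X : NormedSpace) : Prop :=
  forall Phi : (X -> R) -> R,
    (forall f g, in_dual f -> in_dual g -> Phi (fun x => f x + g x) = Phi f + Phi g) ->
    (forall a f, in_dual f -> Phi (fun x => a * f x) = a * Phi f) ->
    (exists C, forall f M, in_dual f -> 0 <= M ->
        (forall x, Rabs (f x) <= M * vnorm x) -> Rabs (Phi f) <= C * M) ->
    exists x : X, forall f, in_dual f -> Phi f = f x.

(* Asymptotic uniform smoothness says: if [e] is small compared to [S] and lies in a
   suitable closed finite-codimensional subspace [E], then |S + e| <= |S| + eps |e|.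
   Such an [E] is cut out, up to a bounded finite-rank correction, by finitely many
   bounded functionals, so any vector on which these functionals are small is close
   to [E].  Along a free ultrafilter the values [f (u n)] of each functional converge;
   hence differences [u a - u b] with [a < b] far out nearly lie in [E], and, when X is
   reflexive, so do the [u n - x] for the weak ultralimit [x] of [u].  Choosing such
   steps greedily keeps the norms of their partial sums [o(k)], so the Cesaro means
   of the steps tend to 0: for the differences this is the alternating Banach-Saks
   property with signs +,-,+,-,..., for [u n - x] the Banach-Saks property with
   limit [x]. *)

From Stdlib Require Import Reals Lra Lia ClassicalEpsilon Classical.
From mathcomp Require classical_sets filter.
Open Scope R_scope.

Arguments vadd_assoc {n}. Arguments vadd_comm {n}. Arguments vadd_0 {n}.
Arguments vadd_opp {n}. Arguments vscal_assoc {n}. Arguments vscal_1 {n}.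
Arguments vscal_distr_l {n}. Arguments vscal_distr_r {n}.
Arguments vnorm_nonneg {n}. Arguments vnorm_eq0 {n}. Arguments vnorm_scal {n}.
Arguments vnorm_triangle {n}.

Section VectorAlgebra.
Context {X : NormedSpace}.
Implicit Types (x y z : X) (f g : nat -> X).

Lemma vadd_0l x : vadd vzero x = x.
Proof. rewrite vadd_comm; apply vadd_0. Qed.

Lemma vadd_cancel_l x y z : vadd x y = vadd x z -> y = z.
Proof.
intros H.
assert (H' : vadd (vopp x) (vadd x y) = vadd (vopp x) (vadd x z)) by now rewrite H.
now rewrite !vadd_assoc, (vadd_comm (vopp x)), vadd_opp, !vadd_0l in H'.
Qed.

Lemma vscal_0 x : vscal 0 x = vzero.
Proof.
apply (vadd_cancel_l (vscal 0 x)).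
rewrite vadd_0, <- vscal_distr_r; f_equal; ring.
Qed.

Lemma vscal_zero a : vscal a (@vzero X) = vzero.
Proof.
apply (vadd_cancel_l (vscal a vzero)).
now rewrite vadd_0, <- vscal_distr_l, vadd_0.
Qed.

Lemma vopp_scal x : vopp x = vscal (-1) x.
Proof.
apply (vadd_cancel_l x); rewrite vadd_opp.
rewrite <- (vscal_1 x) at 1; rewrite <- vscal_distr_r.
replace (1 + -1) with 0 by ring; now rewrite vscal_0.
Qed.

Lemma vsubE x y : vsub x y = vadd x (vscal (-1) y).
Proof. unfold vsub; now rewrite vopp_scal. Qed.

Lemma vnorm_zero : vnorm (@vzero X) = 0.
Proof. rewrite <- (vscal_0 vzero), vnorm_scal, Rabs_R0; ring. Qed.

Lemma vnorm_opp x : vnorm (vopp x) = vnorm x.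
Proof.
rewrite vopp_scal, vnorm_scal, Rabs_left by lra; ring.
Qed.

Lemma vadd_addACA (a b c d : X) :
  vadd (vadd a b) (vadd c d) = vadd (vadd a c) (vadd b d).
Proof.
rewrite <- !vadd_assoc; f_equal.
rewrite !vadd_assoc; f_equal; apply vadd_comm.
Qed.

Lemma vsub_add (a b c d : X) : vsub (vadd a b) (vadd c d) = vadd (vsub a c) (vsub b d).
Proof. rewrite !vsubE, vscal_distr_l; apply vadd_addACA. Qed.

Lemma vsub_0r x : vsub x vzero = x.
Proof. now rewrite vsubE, vscal_zero, vadd_0. Qed.

Lemma vsubK x y : vadd (vsub x y) y = x.
Proof.
unfold vsub; now rewrite <- vadd_assoc, (vadd_comm (vopp y)), vadd_opp, vadd_0.
Qed.

Lemma vaddK x y : vsub (vadd x y) y = x.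
Proof. unfold vsub; now rewrite <- vadd_assoc, vadd_opp, vadd_0. Qed.

Lemma vadd_subKr x y : vadd x (vsub y x) = y.
Proof. now rewrite vadd_comm, vsubK. Qed.

Lemma vscal_sub a x y : vscal a (vsub x y) = vsub (vscal a x) (vscal a y).
Proof. rewrite !vsubE, vscal_distr_l, !vscal_assoc; f_equal; f_equal; ring. Qed.

Lemma vsub_scal a b x : vsub (vscal a x) (vscal b x) = vscal (a - b) x.
Proof. rewrite vsubE, vscal_assoc, <- vscal_distr_r; f_equal; ring. Qed.

Lemma vsub_addr x y z : vsub x (vadd y z) = vsub (vsub x y) z.
Proof. unfold vsub; rewrite !vopp_scal, vscal_distr_l; apply vadd_assoc. Qed.

Lemma vsub_sub4 (a b c d : X) : vsub (vsub a b) (vsub c d) = vsub (vsub a c) (vsub b d).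
Proof. rewrite !vsubE, !vscal_distr_l, !vscal_assoc; apply vadd_addACA. Qed.

Lemma vsub_subl x y z : vsub (vsub x y) (vsub x z) = vsub z y.
Proof.
rewrite !vsubE, vscal_distr_l, vscal_assoc, vadd_addACA, <- vopp_scal, vadd_opp.
replace (-1 * -1) with 1 by ring; now rewrite vadd_0l, vscal_1, vadd_comm.
Qed.

Lemma vsub_subKr x y : vsub x (vsub x y) = y.
Proof.
rewrite !vsubE, vscal_distr_l, vscal_assoc, vadd_assoc.
rewrite <- (vscal_1 x) at 1; rewrite <- vscal_distr_r.
replace (1 + -1) with 0 by ring; replace (-1 * -1) with 1 by ring.
now rewrite vscal_0, vadd_0l, vscal_1.
Qed.

Lemma vnorm_sub_sym x y : vnorm (vsub x y) = vnorm (vsub y x).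
Proof.
rewrite <- vnorm_opp, vopp_scal, !vsubE, vscal_distr_l, vscal_assoc, vadd_comm.
replace (-1 * -1) with 1 by ring; now rewrite vscal_1.
Qed.

Lemma vadd_sub_chain x y z : vadd (vsub x y) (vsub y z) = vsub x z.
Proof.
unfold vsub; rewrite <- vadd_assoc, (vadd_assoc (vopp y)), (vadd_comm (vopp y) y).
now rewrite vadd_opp, vadd_0l.
Qed.

Lemma vnorm_sub_triangle x y z : vnorm (vsub x z) <= vnorm (vsub x y) + vnorm (vsub y z).
Proof. rewrite <- (vadd_sub_chain x y z); apply vnorm_triangle. Qed.

Lemma vnorm_sub_le x y : vnorm (vsub x y) <= vnorm x + vnorm y.
Proof. rewrite <- (vnorm_opp y); apply vnorm_triangle. Qed.

Lemma vsum_ext f g n : (forall i, (i < n)%nat -> f i = g i) -> vsum f n = vsum g n.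
Proof.
induction n as [|n IH]; intros H; simpl; [reflexivity|].
rewrite IH by (intros; apply H; lia); rewrite H by lia; reflexivity.
Qed.

Lemma vsum_add f g n : vsum (fun i => vadd (f i) (g i)) n = vadd (vsum f n) (vsum g n).
Proof.
induction n as [|n IH]; simpl; [now rewrite vadd_0|].
now rewrite IH, vadd_addACA.
Qed.

Lemma vsum_scal a f n : vsum (fun i => vscal a (f i)) n = vscal a (vsum f n).
Proof.
induction n as [|n IH]; simpl; [now rewrite vscal_zero|].
now rewrite IH, vscal_distr_l.
Qed.

Lemma vsum_sub f g n : vsum (fun i => vsub (f i) (g i)) n = vsub (vsum f n) (vsum g n).
Proof.
induction n as [|n IH]; simpl; [now rewrite vsub_0r|].
now rewrite IH, vsub_add.
Qed.

Lemma vsum_const x n : vsum (fun _ => x) n = vscal (INR n) x.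
Proof.
induction n as [|n IH]; [simpl; now rewrite vscal_0|].
cbn [vsum]; rewrite IH, S_INR, vscal_distr_r, vscal_1; reflexivity.
Qed.

Lemma vsum_telescope (g : nat -> X) n :
  vsum (fun j => vsub (g (S j)) (g j)) n = vsub (g n) (g O).
Proof.
induction n as [|n IH]; simpl; [unfold vsub; now rewrite vadd_opp|].
now rewrite IH, vadd_comm, vadd_sub_chain.
Qed.

End VectorAlgebra.

(** * Closed subspaces of finite codimension *)

Section FiniteCodimension.
Context {X : NormedSpace}.

Lemma subspace_sub (E : X -> Prop) x y :
  linear_subspace E -> E x -> E y -> E (vsub x y).
Proof. intros [_ [Hadd Hscal]] Hx Hy; rewrite vsubE; auto. Qed.

Lemma dual_sub (f : X -> R) x y : in_dual f -> f (vsub x y) = f x - f y.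
Proof. intros [Hadd [Hscal _]]; rewrite vsubE, Hadd, Hscal; ring. Qed.

Lemma dual_bound (f : X -> R) : in_dual f ->
  exists K, 0 <= K /\ forall x, Rabs (f x) <= K * vnorm x.
Proof.
intros [_ [_ [M HM]]]; exists (Rabs M); split; [apply Rabs_pos|].
intros x; eapply Rle_trans; [apply HM|].
apply Rmult_le_compat_r; [apply vnorm_nonneg|apply RRle_abs].
Qed.

Lemma duals_uniform_bound (f : nat -> X -> R) m : (forall i, in_dual (f i)) ->
  exists K, 0 <= K /\ forall i x, (i < m)%nat -> Rabs (f i x) <= K * vnorm x.
Proof.
intros Hf; induction m as [|m [K [HK0 HK]]].
- exists 0; split; [lra|intros; lia].
- destruct (dual_bound (f m) (Hf m)) as [K' [HK'0 HK']].
  exists (K + K'); split; [lra|intros i x Hi].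
  pose proof (vnorm_nonneg x).
  destruct (Nat.eq_dec i m) as [->|Hne].
  + specialize (HK' x); nra.
  + specialize (HK i x ltac:(lia)); nra.
Qed.

Lemma vnorm_combination_small (w : nat -> X) m : exists W, 0 <= W /\
  forall (c : nat -> R) eta, (forall i, (i < m)%nat -> Rabs (c i) <= eta) ->
    vnorm (vsum (fun i => vscal (c i) (w i)) m) <= eta * W.
Proof.
induction m as [|m [W [HW0 HW]]].
- exists 0; split; [lra|intros c eta _; simpl; rewrite vnorm_zero; lra].
- exists (W + vnorm (w m)); split; [pose proof (vnorm_nonneg (w m)); lra|].
  intros c eta Hc; simpl.
  eapply Rle_trans; [apply vnorm_triangle|rewrite vnorm_scal].
  specialize (HW c eta ltac:(intros; apply Hc; lia)).
  specialize (Hc m ltac:(lia)); pose proof (vnorm_nonneg (w m)).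
  assert (Rabs (c m) * vnorm (w m) <= eta * vnorm (w m)) by (apply Rmult_le_compat_r; auto).
  lra.
Qed.

Lemma dist_pos_of_not_in_closed (E : X -> Prop) (u : X) : closed_set E -> ~ E u ->
  exists alpha, 0 < alpha /\ forall e : X, E e -> alpha <= vnorm (vsub u e).
Proof.
intros Hcl Hu; apply NNPP; intros Hno; apply Hu.
assert (Hnear : forall k : nat, exists e, E e /\ vnorm (vsub u e) < / INR (S k)).
{ intros k; apply NNPP; intros Hk; apply Hno.
  exists (/ INR (S k)); split; [apply Rinv_0_lt_compat, lt_0_INR; lia|].
  intros e He; apply Rnot_lt_le; intros Hlt; apply Hk; eauto. }
destruct (choice _ Hnear) as [e He].
apply (Hcl e u); [intros k; apply He|].
intros eps Heps; destruct (archimed_cor1 eps Heps) as [N [HN HN0]].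
exists N; intros k Hk; rewrite vnorm_sub_sym.
eapply Rlt_trans; [apply He|]; eapply Rle_lt_trans; [|exact HN].
apply Rinv_le_contravar; [apply lt_0_INR; lia|apply le_INR; lia].
Qed.

Section LineExtension.
Variables (E : X -> Prop) (u : X) (alpha : R).
Hypothesis E_linear : linear_subspace E.
Hypothesis E_closed : closed_set E.
Hypothesis alpha_pos : 0 < alpha.
Hypothesis u_far : forall e, E e -> alpha <= vnorm (vsub u e).

Definition line_ext (y : X) : Prop := exists c, E (vsub y (vscal c u)).

Lemma line_coef_bound e c : E e -> Rabs c * alpha <= vnorm (vadd e (vscal c u)).
Proof.
intros He; destruct (Req_dec c 0) as [->|Hc].
- rewrite Rabs_R0, Rmult_0_l; apply vnorm_nonneg.
- replace (vadd e (vscal c u)) with (vscal c (vsub u (vscal (- / c) e))).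
  + rewrite vnorm_scal; apply Rmult_le_compat_l; [apply Rabs_pos|].
    apply u_far; destruct E_linear as [_ [_ Hscal]]; auto.
  + rewrite vscal_sub, vscal_assoc, vsubE, vscal_assoc, vadd_comm.
    f_equal; rewrite <- (vscal_1 e) at 2; f_equal; field; exact Hc.
Qed.

Lemma line_coef_unique y c1 c2 :
  E (vsub y (vscal c1 u)) -> E (vsub y (vscal c2 u)) -> c1 = c2.
Proof.
intros H1 H2; apply NNPP; intros Hne.
assert (Hdiff := subspace_sub E _ _ E_linear H2 H1).
rewrite vsub_subl, vsub_scal in Hdiff.
assert (Eu : E u).
{ replace u with (vscal (/ (c1 - c2)) (vscal (c1 - c2) u)).
  - destruct E_linear as [_ [_ Hscal]]; auto.
  - rewrite vscal_assoc, Rinv_l, vscal_1; [reflexivity|lra]. }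
specialize (u_far u Eu); unfold vsub in u_far.
rewrite vadd_opp, vnorm_zero in u_far; lra.
Qed.

Lemma line_ext_linear : linear_subspace line_ext.
Proof.
destruct E_linear as [H0 [Hadd Hscal]]; split; [|split].
- exists 0; now rewrite vscal_0, vsub_0r.
- intros x y [c1 Hx] [c2 Hy]; exists (c1 + c2).
  rewrite vscal_distr_r, vsub_add; auto.
- intros a x [c Hx]; exists (a * c).
  rewrite <- vscal_assoc, <- vscal_sub; auto.
Qed.

Lemma line_ext_closed : closed_set line_ext.
Proof.
intros y l Hy Hconv.
destruct (choice _ Hy) as [c Hc].
assert (Hcoef : forall k k', Rabs (c k - c k') * alpha <= vnorm (vsub (y k) (y k'))).
{ intros k k'.
  rewrite <- (vsubK (vsub (y k) (y k')) (vsub (vscal (c k) u) (vscal (c k') u))).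
  rewrite <- vsub_sub4, vsub_scal.
  apply line_coef_bound, subspace_sub; auto. }
assert (Hcauchy : Cauchy_crit c).
{ intros eps Heps.
  destruct (Hconv (eps * alpha / 2)) as [N HN]; [nra|].
  exists N; intros k k' Hk Hk'; unfold R_dist.
  apply (Rmult_lt_reg_r alpha); [exact alpha_pos|].
  eapply Rle_lt_trans; [apply Hcoef|].
  eapply Rle_lt_trans; [apply (vnorm_sub_triangle _ l)|].
  rewrite (vnorm_sub_sym l); pose proof (HN k Hk); pose proof (HN k' Hk'); lra. }
destruct (R_complete c Hcauchy) as [c0 Hc0].
exists c0; apply (E_closed (fun k => vsub (y k) (vscal (c k) u))); [exact Hc|].
intros eps Heps.
set (r := eps / (2 * (vnorm u + 1))).
assert (Hr : 0 < r) by (unfold r; pose proof (vnorm_nonneg u); apply Rdiv_lt_0_compat; lra).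
assert (Hru : r * vnorm u <= eps / 2).
{ unfold r; pose proof (vnorm_nonneg u).
  apply (Rmult_le_reg_r (2 * (vnorm u + 1))); [lra|].
  replace (eps / (2 * (vnorm u + 1)) * vnorm u * (2 * (vnorm u + 1))) with (eps * vnorm u)
    by (field; lra); nra. }
destruct (Hconv (eps / 2)) as [N1 HN1]; [lra|].
destruct (Hc0 r Hr) as [N2 HN2].
exists (max N1 N2); intros k Hk.
rewrite vsub_sub4, vsub_scal.
eapply Rle_lt_trans; [apply vnorm_sub_le|rewrite vnorm_scal].
specialize (HN1 k ltac:(lia)); specialize (HN2 k ltac:(lia)); unfold R_dist in HN2.
assert (Rabs (c k - c0) * vnorm u <= r * vnorm u)
  by (apply Rmult_le_compat_r; [apply vnorm_nonneg|lra]).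
lra.
Qed.

Lemma line_ext_coordinate (T : X -> X) K :
  (forall x y, T (vadd x y) = vadd (T x) (T y)) ->
  (forall a x, T (vscal a x) = vscal a (T x)) ->
  (forall x, vnorm (T x) <= K * vnorm x) ->
  (forall x, line_ext (T x)) ->
  exists g, in_dual g /\ forall x, E (vsub (T x) (vscal (g x) u)).
Proof.
intros Tadd Tscal Tbound HT.
destruct (choice _ HT) as [g Hg].
destruct E_linear as [_ [Hadd Hscal]].
exists g; split; [|exact Hg]; split; [|split].
- intros x y; symmetry; apply (line_coef_unique (T (vadd x y))); [|apply Hg].
  rewrite Tadd, vscal_distr_r, vsub_add; auto.
- intros a x; symmetry; apply (line_coef_unique (T (vscal a x))); [|apply Hg].
  rewrite Tscal, <- vscal_assoc, <- vscal_sub; auto.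
- exists (K / alpha); intros x.
  apply (Rmult_le_reg_r alpha); [exact alpha_pos|].
  replace (K / alpha * vnorm x * alpha) with (K * vnorm x) by (field; lra).
  eapply Rle_trans; [|apply Tbound].
  rewrite <- (vsubK (T x) (vscal (g x) u)); apply line_coef_bound, Hg.
Qed.

End LineExtension.

Definition residual (f : nat -> X -> R) (w : nat -> X) m (x : X) : X :=
  vsub x (vsum (fun i => vscal (f i x) (w i)) m).

Section Residual.
Variables (f : nat -> X -> R) (w : nat -> X) (m : nat).
Hypothesis f_dual : forall i, in_dual (f i).

Lemma residual_add x y : residual f w m (vadd x y) = vadd (residual f w m x) (residual f w m y).
Proof.
unfold residual; rewrite <- vsub_add, <- vsum_add; f_equal.
apply vsum_ext; intros i _; destruct (f_dual i) as [Hadd _].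
now rewrite Hadd, vscal_distr_r.
Qed.

Lemma residual_scal a x : residual f w m (vscal a x) = vscal a (residual f w m x).
Proof.
unfold residual; rewrite vscal_sub, <- vsum_scal; f_equal.
apply vsum_ext; intros i _; destruct (f_dual i) as [_ [Hscal _]].
now rewrite Hscal, vscal_assoc.
Qed.

Lemma residual_bound : exists K, forall x, vnorm (residual f w m x) <= K * vnorm x.
Proof.
destruct (duals_uniform_bound f m f_dual) as [K [HK0 HK]].
destruct (vnorm_combination_small w m) as [W [HW0 HW]].
exists (1 + K * W); intros x; unfold residual.
eapply Rle_trans; [apply vnorm_sub_le|].
assert (Hc := HW (fun i => f i x) (K * vnorm x) (fun i Hi => HK i x Hi)).
pose proof (vnorm_nonneg x); nra.
Qed.

Lemma residual_extend (g : X -> R) (u x : X) :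
  residual (fun i => if Nat.eq_dec i m then g else f i)
    (fun i => if Nat.eq_dec i m then u else w i) (S m) x =
  vsub (residual f w m x) (vscal (g x) u).
Proof.
unfold residual; simpl; destruct (Nat.eq_dec m m) as [_|]; [|congruence].
rewrite vsub_addr; do 2 f_equal; apply vsum_ext.
intros i Hi; destruct (Nat.eq_dec i m); [lia|reflexivity].
Qed.

End Residual.

Lemma projection_of_span n : forall (v : nat -> X) (E : X -> Prop),
  linear_subspace E -> closed_set E ->
  (forall x, exists e c, E e /\ x = vadd e (vsum (fun i => vscal (c i) (v i)) n)) ->
  exists m f w, (forall i, in_dual (f i)) /\ forall x, E (residual f w m x).
Proof.
induction n as [|n IH]; intros v E Hlin Hcl Hspan.
- exists O, (fun _ _ => 0), (fun _ => vzero); split.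
  + intros _; split; [|split]; [intros; ring|intros; ring|].
    exists 0; intros; rewrite Rabs_R0; lra.
  + intros x; destruct (Hspan x) as [e [c [He ->]]]; unfold residual; simpl.
    now rewrite vadd_0, vsub_0r.
- set (u := v n).
  assert (Hsplit : forall e x c, x = vadd e (vsum (fun i => vscal (c i) (v i)) (S n)) ->
            x = vadd (vadd e (vscal (c n) u)) (vsum (fun i => vscal (c i) (v i)) n)).
  { intros e x c ->; simpl; rewrite <- !vadd_assoc; f_equal; apply vadd_comm. }
  destruct (classic (E u)) as [Eu|Eu].
  { apply (IH v E Hlin Hcl); intros x.
    destruct (Hspan x) as [e [c [He Hx]]].
    exists (vadd e (vscal (c n) u)), c; split; [|exact (Hsplit e x c Hx)].
    destruct Hlin as [_ [Hadd Hscal]]; auto. }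
  destruct (dist_pos_of_not_in_closed E u Hcl Eu) as [alpha [Halpha Hfar]].
  destruct (IH v (line_ext E u) (line_ext_linear E u Hlin)
              (line_ext_closed E u alpha Hlin Hcl Halpha Hfar)) as [m [f [w [Hf HE]]]].
  { intros x; destruct (Hspan x) as [e [c [He Hx]]].
    exists (vadd e (vscal (c n) u)), c; split; [|exact (Hsplit e x c Hx)].
    exists (c n); now rewrite vaddK. }
  destruct (residual_bound f w m Hf) as [K HK].
  destruct (line_ext_coordinate E u alpha Hlin Halpha Hfar (residual f w m) K
              (residual_add f w m Hf) (residual_scal f w m Hf) HK HE) as [g [Hg HgE]].
  exists (S m), (fun i => if Nat.eq_dec i m then g else f i),
    (fun i => if Nat.eq_dec i m then u else w i); split.
  + intros i; destruct (Nat.eq_dec i m); auto.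
  + intros x; rewrite residual_extend; apply HgE.
Qed.

Lemma closed_fin_codim_full : closed_fin_codim (fun _ : X => True).
Proof.
split; [split; [|split]; auto|split; [intros u y _ _; exact I|]].
exists O, (fun _ => vzero); intros x; exists x, (fun _ => 0); simpl; now rewrite vadd_0.
Qed.

Lemma closed_fin_codim_projection (E : X -> Prop) : closed_fin_codim E ->
  exists m f w, (forall i, in_dual (f i)) /\ forall x, E (residual f w m x).
Proof. intros [Hlin [Hcl [n [v Hspan]]]]; exact (projection_of_span n v E Hlin Hcl Hspan). Qed.

Lemma near_subspace_of_small_functionals (E : X -> Prop) d :
  closed_fin_codim E -> 0 < d ->
  exists m f eta, 0 < eta /\ (forall i, in_dual (f i)) /\
    forall y, (forall i, (i < m)%nat -> Rabs (f i y) <= eta) ->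
      exists e, E e /\ vnorm (vsub y e) < d.
Proof.
intros HE Hd; destruct (closed_fin_codim_projection E HE) as [m [f [w [Hf HEf]]]].
destruct (vnorm_combination_small w m) as [W [HW0 HW]].
exists m, f, (d / (2 * (W + 1))); split; [apply Rdiv_lt_0_compat; lra|split; [exact Hf|]].
intros y Hy; exists (residual f w m y); split; [apply HEf|].
unfold residual; rewrite vsub_subKr; eapply Rle_lt_trans; [exact (HW _ _ Hy)|].
apply (Rmult_lt_reg_r (2 * (W + 1))); [lra|].
replace (d / (2 * (W + 1)) * W * (2 * (W + 1))) with (d * W) by (field; lra); nra.
Qed.

End FiniteCodimension.

(** * Sublinear walks in asymptotically uniformly smooth spaces *)

Definition sublinear (a : nat -> R) : Prop :=
  forall eta, 0 < eta -> exists A, forall k, a k <= A + eta * INR k.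

Lemma largest_below (p : nat -> Prop) m : (exists q, (q <= m)%nat /\ p q) ->
  exists q, (q <= m)%nat /\ p q /\ forall q', (q' <= m)%nat -> p q' -> (q' <= q)%nat.
Proof.
induction m as [|m IH]; intros [q [Hq Hp]].
- exists O; replace q with O in Hp by lia; repeat split; [lia|exact Hp|intros; lia].
- destruct (classic (p (S m))) as [HS|HS].
  + exists (S m); repeat split; [lia|exact HS|intros; lia].
  + destruct IH as [q0 [Hq0 [Hp0 Hmax]]].
    { exists q; split; [|exact Hp].
      destruct (Nat.eq_dec q (S m)) as [->|]; [contradiction|lia]. }
    exists q0; repeat split; [lia|exact Hp0|].
    intros q' Hq' Hp'; destruct (Nat.eq_dec q' (S m)) as [->|]; [contradiction|].
    apply Hmax; [lia|exact Hp'].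
Qed.

Lemma recursive_choice {A : Type} (Rel : nat -> A -> A -> Prop) (a0 : A) :
  (forall j a, exists b, Rel j a b) ->
  exists g : nat -> A, g O = a0 /\ forall j, Rel j (g j) (g (S j)).
Proof.
intros H.
destruct (choice (fun p : nat * A => Rel (fst p) (snd p)) (fun p => H (fst p) (snd p)))
  as [f Hf].
exists (nat_rect (fun _ => A) a0 (fun j a => f (j, a))); split; [reflexivity|].
intros j; exact (Hf (j, _)).
Qed.

Lemma sublinear_of_thresholds (s r : nat -> R) M :
  (forall m, s (S m) <= s m + M) ->
  (forall m q, (q <= m)%nat -> r q <= s m -> s (S m) <= s m + / INR (S q)) ->
  sublinear s.
Proof.
intros Hinc Hthr eta Heta.
destruct (archimed_cor1 eta Heta) as [[|q] [Hq Hq0]]; [lia|].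
set (B := Rmax (s (S q)) (r q + M)).
assert (HBs : s (S q) <= B) by apply Rmax_l.
assert (HBr : r q + M <= B) by apply Rmax_r.
assert (Htail : forall m, (S q <= m)%nat -> s m <= B + eta * INR m).
{ induction m as [|m IH]; intros Hm; [lia|].
  assert (Hpos : 0 <= eta * INR m) by (apply Rmult_le_pos; [lra|apply pos_INR]).
  rewrite S_INR.
  destruct (Nat.eq_dec (S q) (S m)) as [Heq|Hne].
  { rewrite <- Heq; lra. }
  specialize (IH ltac:(lia)).
  destruct (Rle_dec (r q) (s m)) as [Hr|Hr].
  - specialize (Hthr m q ltac:(lia) Hr); lra.
  - specialize (Hinc m); lra. }
assert (Hhead : forall m, s m <= s O + INR m * Rabs M).
{ induction m as [|m IH]; [simpl; lra|].
  rewrite S_INR; specialize (Hinc m); pose proof (Rle_abs M); lra. }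
exists (Rmax B (s O + INR (S q) * Rabs M)); intros m.
pose proof (pos_INR m); pose proof (Rabs_pos M).
destruct (Nat.le_gt_cases (S q) m) as [Hm|Hm].
- specialize (Htail m Hm); pose proof (Rmax_l B (s O + INR (S q) * Rabs M)); lra.
- specialize (Hhead m); pose proof (Rmax_r B (s O + INR (S q) * Rabs M)).
  assert (INR m * Rabs M <= INR (S q) * Rabs M)
    by (apply Rmult_le_compat_r; [exact (Rabs_pos M)|apply le_INR; lia]).
  nra.
Qed.

Section SmoothWalks.
Context {X : NormedSpace}.

Lemma vnorm_add_scal_convex (x h : X) s t : 0 <= s -> s <= t -> 0 < t ->
  vnorm (vadd x (vscal s h)) <=
    (1 - s / t) * vnorm x + s / t * vnorm (vadd x (vscal t h)).
Proof.
intros Hs Hst Ht.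
assert (Hst0 : 0 <= s / t) by (apply Rle_mult_inv_pos; lra).
assert (Hst1 : s / t <= 1).
{ apply (Rmult_le_reg_r t); [lra|]; unfold Rdiv; rewrite Rmult_assoc, Rinv_l; lra. }
replace (vadd x (vscal s h))
  with (vadd (vscal (1 - s / t) x) (vscal (s / t) (vadd x (vscal t h)))).
- eapply Rle_trans; [apply vnorm_triangle|].
  rewrite !vnorm_scal, !Rabs_pos_eq by lra; lra.
- rewrite vscal_distr_l, vscal_assoc, vadd_assoc, <- vscal_distr_r.
  replace (1 - s / t + s / t) with 1 by ring; replace (s / t * t) with s by (field; lra).
  now rewrite vscal_1.
Qed.

Lemma aus_local_estimate : asymptotically_uniformly_smooth X ->
  forall eps, 0 < eps -> exists t, 0 < t /\ forall y : X, 0 < vnorm y ->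
    exists E, closed_fin_codim E /\ forall e, E e -> vnorm e <= t * vnorm y ->
      vnorm (vadd y e) <= vnorm y + eps * vnorm e.
Proof.
intros Haus eps Heps.
destruct (Haus (eps / 2)) as [delta [Hdelta Hmod]]; [lra|].
exists (delta / 2); split; [lra|]; set (t := delta / 2); intros y HS.
set (x := vscal (/ vnorm y) y).
assert (Hx : vnorm x = 1).
{ unfold x; rewrite vnorm_scal, Rabs_pos_eq; [field; lra|left; apply Rinv_0_lt_compat; lra]. }
destruct (Hmod t ltac:(unfold t; lra) ltac:(unfold t; lra) x Hx (eps * t))
  as [E [HE Hsmooth]]; [unfold t; nra|].
exists E; split; [exact HE|]; intros e He Het.
destruct (Req_dec (vnorm e) 0) as [He0|He0].
{ apply vnorm_eq0 in He0; subst e; rewrite vadd_0, vnorm_zero; lra. }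
pose proof (vnorm_nonneg e).
set (s := vnorm e / vnorm y).
set (h := vscal (/ vnorm e) e).
assert (Hh : vnorm h = 1).
{ unfold h; rewrite vnorm_scal, Rabs_pos_eq; [field; lra|left; apply Rinv_0_lt_compat; lra]. }
assert (Eh : E h) by (destruct HE as [[_ [_ Hscal]] _]; apply Hscal, He).
assert (Hs : 0 <= s <= t).
{ unfold s; split; [apply Rle_mult_inv_pos; lra|].
  apply (Rmult_le_reg_r (vnorm y)); [lra|]; unfold Rdiv; rewrite Rmult_assoc, Rinv_l; lra. }
assert (HSe : vadd y e = vscal (vnorm y) (vadd x (vscal s h))).
{ unfold x, s, h; rewrite vscal_distr_l, !vscal_assoc, Rinv_r by lra.
  replace (vnorm y * (vnorm e / vnorm y) * / vnorm e) with 1 by (field; lra).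
  now rewrite !vscal_1. }
assert (Hxsh : vnorm (vadd x (vscal s h)) <= 1 + eps * s).
{ eapply Rle_trans; [apply vnorm_add_scal_convex; [apply Hs|apply Hs|unfold t; lra]|].
  specialize (Hsmooth h Eh Hh); rewrite Hx.
  assert (s / t * vnorm (vadd x (vscal t h)) <= s / t * (1 + eps * t))
    by (apply Rmult_le_compat_l; [apply Rle_mult_inv_pos; unfold t in *; lra|lra]).
  replace (s / t * (1 + eps * t)) with (s / t + eps * s) in H0 by (unfold t; field; lra).
  lra. }
rewrite HSe, vnorm_scal, Rabs_pos_eq by lra.
replace (vnorm y + eps * vnorm e) with (vnorm y * (1 + eps * s)) by (unfold s; field; lra).
apply Rmult_le_compat_l; lra.
Qed.

(* [P N N' v] reads: [v] is an admissible step built from indices in [[N, N')]. *)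
Definition steps_approach_subspaces (P : nat -> nat -> X -> Prop) : Prop :=
  forall N (E : X -> Prop) d, closed_fin_codim E -> 0 < d ->
    exists N' v e, P N N' v /\ E e /\ vnorm (vsub v e) < d.

Lemma aus_small_increment (P : nat -> nat -> X -> Prop) M :
  asymptotically_uniformly_smooth X ->
  (forall N N' v, P N N' v -> vnorm v <= M) -> steps_approach_subspaces P ->
  forall eta, 0 < eta -> exists r, forall (y : X) N, r <= vnorm y ->
    exists N' v, P N N' v /\ vnorm (vadd y v) <= vnorm y + eta.
Proof.
intros Haus HM Happ eta Heta.
set (K := Rabs M + 1).
assert (HK : 0 < K) by (unfold K; pose proof (Rabs_pos M); lra).
destruct (aus_local_estimate Haus (eta / (2 * K))) as [t [Ht Hloc]];
  [apply Rdiv_lt_0_compat; lra|].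
exists (K / t); intros y N HS.
assert (HKS : K <= t * vnorm y).
{ apply (Rmult_le_compat_l t) in HS; [|lra].
  replace (t * (K / t)) with K in HS by (field; lra); exact HS. }
destruct (Hloc y ltac:(nra)) as [E [HE Hsmooth]].
destruct (Happ N E (Rmin 1 (eta / 2)) HE) as [N' [v [e [HP [He Hve]]]]];
  [apply Rmin_glb_lt; lra|].
exists N', v; split; [exact HP|].
pose proof (Rmin_l 1 (eta / 2)); pose proof (Rmin_r 1 (eta / 2)).
assert (HeK : vnorm e <= K).
{ rewrite <- (vsub_subKr v e).
  eapply Rle_trans; [apply vnorm_sub_le|].
  specialize (HM _ _ _ HP); pose proof (Rle_abs M); unfold K; lra. }
specialize (Hsmooth e He ltac:(lra)).
assert (eta / (2 * K) * vnorm e <= eta / 2).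
{ apply (Rmult_le_reg_r (2 * K)); [lra|].
  replace (eta / (2 * K) * vnorm e * (2 * K)) with (eta * vnorm e) by (field; lra).
  pose proof (vnorm_nonneg e); nra. }
rewrite <- (vadd_subKr e v), vadd_assoc.
eapply Rle_trans; [apply vnorm_triangle|lra].
Qed.

Lemma aus_sublinear_walk (P : nat -> nat -> X -> Prop) M :
  asymptotically_uniformly_smooth X ->
  (forall N N' v, P N N' v -> vnorm v <= M) -> steps_approach_subspaces P ->
  exists (Ns : nat -> nat) (vs : nat -> X), (forall j, P (Ns j) (Ns (S j)) (vs j)) /\
    sublinear (fun m => vnorm (vsum vs m)).
Proof.
intros Haus HM Happ.
assert (Hthr : forall q : nat, exists r, forall (y : X) N, r <= vnorm y ->
          exists N' v, P N N' v /\ vnorm (vadd y v) <= vnorm y + / INR (S q)).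
{ intros q; apply (aus_small_increment P M Haus HM Happ), Rinv_0_lt_compat, lt_0_INR; lia. }
destruct (choice _ Hthr) as [r Hr].
set (step := fun j (a b : nat * X) => exists v, P (fst a) (fst b) v /\ snd b = vadd (snd a) v /\
  forall q, (q <= j)%nat -> r q <= vnorm (snd a) ->
    vnorm (snd b) <= vnorm (snd a) + / INR (S q)).
destruct (recursive_choice step (O, vzero)) as [g [Hg0 Hg]].
{ intros j [N y]; unfold step; cbn [fst snd].
  destruct (classic (exists q, (q <= j)%nat /\ r q <= vnorm y)) as [Hpassed|Hnone].
  - destruct (largest_below _ j Hpassed) as [q [Hqj [Hrq Hmax]]].
    destruct (Hr q y N Hrq) as [N' [v [HP Hv]]].
    exists (N', vadd y v), v; cbn [fst snd]; repeat split; [exact HP|].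
    intros q' Hq' Hrq'; eapply Rle_trans; [exact Hv|].
    apply Rplus_le_compat_l, Rinv_le_contravar; [apply lt_0_INR; lia|].
    apply le_INR; specialize (Hmax q' Hq' Hrq'); lia.
  - destruct (Happ N (fun _ => True) 1 closed_fin_codim_full ltac:(lra))
      as [N' [v [_ [HP _]]]].
    exists (N', vadd y v), v; cbn [fst snd]; repeat split; [exact HP|].
    intros q Hq Hrq; exfalso; eauto. }
exists (fun j => fst (g j)), (fun j => vsub (snd (g (S j))) (snd (g j))); split.
- intros j; destruct (Hg j) as [v [HP [-> _]]].
  now rewrite vadd_comm, vaddK.
- intros eta Heta.
  destruct (sublinear_of_thresholds (fun m => vnorm (snd (g m))) r M) with (eta := eta)
    as [A HA]; [| |exact Heta|].
  + intros m; destruct (Hg m) as [v [HP [-> _]]].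
    eapply Rle_trans; [apply vnorm_triangle|specialize (HM _ _ _ HP); lra].
  + intros m q Hq Hrq; destruct (Hg m) as [v [_ [_ Hstep]]]; exact (Hstep q Hq Hrq).
  + exists A; intros k; rewrite (vsum_telescope (fun n => snd (g n))), Hg0; cbn [snd].
    rewrite vsub_0r; apply HA.
Qed.

Lemma cesaro_sublinear (f : nat -> X) :
  sublinear (fun k => vnorm (vsum f k)) -> vconverges_to (cesaro f) vzero.
Proof.
intros Hf eps Heps.
destruct (Hf (eps / 2)) as [A HA]; [lra|].
destruct (INR_unbounded (2 * Rabs A / eps)) as [N HN].
exists (S N); intros k Hk.
assert (HNk : INR N < INR k) by (apply lt_INR; lia).
assert (Hk0 : 0 < INR k) by (pose proof (pos_INR N); lra).
assert (HAk : 2 * Rabs A < eps * INR k).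
{ replace (2 * Rabs A) with (2 * Rabs A / eps * eps) by (field; lra); nra. }
unfold cesaro; rewrite vsub_0r, vnorm_scal, Rabs_pos_eq
  by (left; apply Rinv_0_lt_compat; exact Hk0).
apply (Rmult_lt_reg_l (INR k)); [exact Hk0|].
rewrite <- Rmult_assoc, Rinv_r, Rmult_1_l by lra.
specialize (HA k); pose proof (Rle_abs A); lra.
Qed.

Lemma converges_of_cesaro_sub (f : nat -> X) x :
  vconverges_to (cesaro (fun j => vsub (f j) x)) vzero -> vconverges_to (cesaro f) x.
Proof.
intros H eps Heps; destruct (H eps Heps) as [N HN].
exists (S N); intros k Hk; specialize (HN k ltac:(lia)).
unfold cesaro in HN; rewrite vsum_sub, vsum_const, vscal_sub, vscal_assoc, Rinv_l, vscal_1,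
  vsub_0r in HN by (apply not_0_INR; lia).
exact HN.
Qed.

End SmoothWalks.

(** * Ultralimits *)

Record free_ultrafilter (U : (nat -> Prop) -> Prop) : Prop := {
  ultra_tail : forall N, U (fun n => (N <= n)%nat);
  ultra_proper : ~ U (fun _ => False);
  ultra_and : forall A B, U A -> U B -> U (fun n => A n /\ B n);
  ultra_mono : forall A B : nat -> Prop, (forall n, A n -> B n) -> U A -> U B;
  ultra_dichotomy : forall A, U A \/ U (fun n => ~ A n) }.

Arguments ultra_tail {U}. Arguments ultra_proper {U}. Arguments ultra_and {U}.
Arguments ultra_mono {U}. Arguments ultra_dichotomy {U}.

Lemma free_ultrafilter_exists : exists U, free_ultrafilter U.
Proof.
destruct (filter.ultraFilterLemma filter.eventually_filter) as [G [GU sFG]].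
exists G; split.
- intros N; apply sFG; exists N; [exact I|].
  intros n Hn; now apply (Bool.reflect_iff _ _ (ssrnat.leP)).
- intros HF; now destruct (@filter.filter_ex _ G _ (fun _ => False) HF).
- intros A B HA HB; now apply filter.filterI.
- intros A B HAB HA; exact (filter.filterS HAB HA).
- intros A; exact (filter.in_ultra_setVsetC A GU).
Qed.

Section UltraLimits.
Variables (U : (nat -> Prop) -> Prop) (HU : free_ultrafilter U).

Lemma ultra_true : U (fun _ => True).
Proof. exact (ultra_mono HU _ _ (fun _ _ => I) (ultra_tail HU O)). Qed.

Lemma ultra_frequently A N : U A -> exists n, (N <= n)%nat /\ A n.
Proof.
intros HA; apply NNPP; intros Hno; apply (ultra_proper HU).
exact (ultra_mono HU _ _ (fun n Hn => Hno (ex_intro _ n Hn))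
  (ultra_and HU _ _ (ultra_tail HU N) HA)).
Qed.

Lemma ultra_forall_lt (A : nat -> nat -> Prop) m :
  (forall i, (i < m)%nat -> U (A i)) -> U (fun n => forall i, (i < m)%nat -> A i n).
Proof.
induction m as [|m IH]; intros H.
- refine (ultra_mono HU _ _ (fun _ _ => _) ultra_true); intros i Hi; lia.
- apply (ultra_mono HU (fun n => (forall i, (i < m)%nat -> A i n) /\ A m n)).
  + intros n [Hlt Hm] i Hi; destruct (Nat.eq_dec i m) as [->|]; [exact Hm|apply Hlt; lia].
  + apply (ultra_and HU); [apply IH; intros; apply H; lia|apply H; lia].
Qed.

Definition is_ulim (g : nat -> R) (L : R) : Prop :=
  forall eta, 0 < eta -> U (fun n => Rabs (g n - L) < eta).

(* The ultralimit is the supremum of the [a] with [a <= g n] for U-almost all [n]. *)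
Lemma is_ulim_exists (g : nat -> R) C : (forall n, Rabs (g n) <= C) -> exists L, is_ulim g L.
Proof.
intros HC.
set (lower := fun a => U (fun n => a <= g n)).
assert (Hbound : bound lower).
{ exists C; intros a Ha; apply Rnot_lt_le; intros Hlt; apply (ultra_proper HU).
  refine (ultra_mono HU _ _ (fun n Hn => _) Ha).
  pose proof (Rle_abs (g n)); pose proof (HC n); lra. }
assert (Hinh : exists a, lower a).
{ exists (- C); refine (ultra_mono HU _ _ (fun n _ => _) ultra_true).
  pose proof (Rle_abs (- g n)); rewrite Rabs_Ropp in *; pose proof (HC n); lra. }
destruct (completeness lower Hbound Hinh) as [L [Hub Hleast]].
exists L; intros eta Heta.
assert (Hbelow : U (fun n => L - eta < g n)).
{ apply NNPP; intros Hno.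
  assert (L <= L - eta); [|lra].
  apply Hleast; intros a Ha; apply Rnot_lt_le; intros Hlt; apply Hno.
  refine (ultra_mono HU _ _ (fun n Hn => _) Ha); lra. }
assert (Habove : U (fun n => g n < L + eta)).
{ destruct (ultra_dichotomy HU (fun n => g n < L + eta)) as [H|H]; [exact H|].
  assert (L + eta <= L); [|lra].
  apply Hub, (ultra_mono HU _ _ (fun n Hn => Rnot_lt_le _ _ Hn) H). }
refine (ultra_mono HU _ _ (fun n Hn => _) (ultra_and HU _ _ Hbelow Habove)).
destruct Hn; apply Rabs_def1; lra.
Qed.

Lemma is_ulim_unique g L1 L2 : is_ulim g L1 -> is_ulim g L2 -> L1 = L2.
Proof.
intros H1 H2; apply NNPP; intros Hne.
set (d := Rabs (L1 - L2) / 2).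
assert (Hd : 0 < d) by (apply Rdiv_lt_0_compat; [apply Rabs_pos_lt|]; lra).
destruct (ultra_frequently _ O (ultra_and HU _ _ (H1 d Hd) (H2 d Hd))) as [n [_ [Hn1 Hn2]]].
pose proof (Rabs_triang (L1 - g n) (g n - L2)).
replace (L1 - g n + (g n - L2)) with (L1 - L2) in H by ring.
rewrite (Rabs_minus_sym L1 (g n)) in H; unfold d in *; lra.
Qed.

Lemma is_ulim_plus g1 g2 L1 L2 : is_ulim g1 L1 -> is_ulim g2 L2 ->
  is_ulim (fun n => g1 n + g2 n) (L1 + L2).
Proof.
intros H1 H2 eta Heta.
refine (ultra_mono HU _ _ (fun n Hn => _) (ultra_and HU _ _ (H1 (eta / 2) ltac:(lra)) (H2 (eta / 2) ltac:(lra)))).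
destruct Hn as [Hn1 Hn2].
pose proof (Rabs_triang (g1 n - L1) (g2 n - L2)).
replace (g1 n - L1 + (g2 n - L2)) with (g1 n + g2 n - (L1 + L2)) in H by ring; lra.
Qed.

Lemma is_ulim_scal a g L : is_ulim g L -> is_ulim (fun n => a * g n) (a * L).
Proof.
intros H eta Heta.
assert (Ha : 0 < Rabs a + 1) by (pose proof (Rabs_pos a); lra).
refine (ultra_mono HU _ _ (fun n Hn => _) (H (eta / (Rabs a + 1)) ltac:(apply Rdiv_lt_0_compat; lra))).
replace (a * g n - a * L) with (a * (g n - L)) by ring; rewrite Rabs_mult.
pose proof (Rabs_pos a); pose proof (Rabs_pos (g n - L)).
apply (Rle_lt_trans _ (Rabs a * (eta / (Rabs a + 1)))); [apply Rmult_le_compat_l; lra|].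
apply (Rmult_lt_reg_r (Rabs a + 1)); [exact Ha|].
replace (Rabs a * (eta / (Rabs a + 1)) * (Rabs a + 1)) with (Rabs a * eta) by (field; lra); nra.
Qed.

Lemma is_ulim_bound g L C : is_ulim g L -> (forall n, Rabs (g n) <= C) -> Rabs L <= C.
Proof.
intros H HC; apply Rnot_lt_le; intros Hlt.
destruct (ultra_frequently _ O (H (Rabs L - C) ltac:(lra))) as [n [_ Hn]].
pose proof (Rabs_triang (g n) (L - g n)); replace (g n + (L - g n)) with L in H0 by ring.
rewrite Rabs_minus_sym in H0; specialize (HC n); lra.
Qed.

End UltraLimits.

(** * Banach-Saks properties *)

Section Steps.
Context {X : NormedSpace}.
Variables (U : (nat -> Prop) -> Prop) (HU : free_ultrafilter U).

Lemma dual_bounded_seq (f : X -> R) (u : nat -> X) M :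
  in_dual f -> (forall n, vnorm (u n) <= M) -> exists C, forall n, Rabs (f (u n)) <= C.
Proof.
intros Hf Hu; destruct (dual_bound f Hf) as [K [HK0 HK]].
exists (K * M); intros n; eapply Rle_trans; [apply HK|].
apply Rmult_le_compat_l; [exact HK0|apply Hu].
Qed.

Definition difference_steps (u : nat -> X) N N' v : Prop :=
  exists a b, (N <= a)%nat /\ (a < b)%nat /\ N' = S b /\ v = vsub (u a) (u b).

Definition offset_steps (u : nat -> X) (x : X) N N' v : Prop :=
  exists n, (N <= n)%nat /\ N' = S n /\ v = vsub (u n) x.

(* Two indices beyond [N] lying in the same U-neighbourhood of the ultralimits
   of the finitely many functionals cutting out [E]. *)
Lemma difference_steps_approach (u : nat -> X) M :
  (forall n, vnorm (u n) <= M) -> steps_approach_subspaces (difference_steps u).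
Proof.
intros Hu N E d HE Hd.
destruct (near_subspace_of_small_functionals E d HE Hd) as [m [f [eta [Heta [Hf Hnear]]]]].
assert (Hlim : forall i, exists L, is_ulim U (fun n => f i (u n)) L).
{ intros i; destruct (dual_bounded_seq (f i) u M (Hf i) Hu) as [C HC].
  exact (is_ulim_exists U HU _ C HC). }
destruct (choice _ Hlim) as [L HL].
assert (Hclose := ultra_forall_lt U HU (fun i n => Rabs (f i (u n) - L i) < eta / 2) m
  (fun i _ => HL i (eta / 2) ltac:(lra))).
destruct (ultra_frequently U HU _ N Hclose) as [a [Ha Hca]].
destruct (ultra_frequently U HU _ (S a) Hclose) as [b [Hb Hcb]].
destruct (Hnear (vsub (u a) (u b))) as [e [He Hve]].
{ intros i Hi; rewrite dual_sub by apply Hf.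
  specialize (Hca i Hi); specialize (Hcb i Hi).
  pose proof (Rabs_triang (f i (u a) - L i) (L i - f i (u b))).
  rewrite (Rabs_minus_sym (L i)) in H.
  replace (f i (u a) - L i + (L i - f i (u b))) with (f i (u a) - f i (u b)) in H by ring.
  lra. }
exists (S b), (vsub (u a) (u b)), e; split; [|split; assumption].
exists a, b; repeat split; lia.
Qed.

Lemma offset_steps_approach (u : nat -> X) x :
  (forall f, in_dual f -> is_ulim U (fun n => f (u n)) (f x)) ->
  steps_approach_subspaces (offset_steps u x).
Proof.
intros Hx N E d HE Hd.
destruct (near_subspace_of_small_functionals E d HE Hd) as [m [f [eta [Heta [Hf Hnear]]]]].
assert (Hclose := ultra_forall_lt U HU (fun i n => Rabs (f i (u n) - f i x) < eta) m
  (fun i _ => Hx (f i) (Hf i) eta Heta)).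
destruct (ultra_frequently U HU _ N Hclose) as [a [Ha Hca]].
destruct (Hnear (vsub (u a) x)) as [e [He Hve]].
{ intros i Hi; rewrite dual_sub by apply Hf; left; exact (Hca i Hi). }
exists (S a), (vsub (u a) x), e; split; [|split; assumption].
exists a; repeat split; lia.
Qed.

(* Reflexivity represents the functional [f |-> U-lim f (u n)] by a point of [X]. *)
Lemma reflexive_weak_ulim (u : nat -> X) M : reflexive X -> (forall n, vnorm (u n) <= M) ->
  exists x, forall f, in_dual f -> is_ulim U (fun n => f (u n)) (f x).
Proof.
intros Hrefl Hu.
set (Phi := fun f : X -> R => epsilon (inhabits 0) (is_ulim U (fun n => f (u n)))).
assert (HPhi : forall f : X -> R, (exists C, forall n, Rabs (f (u n)) <= C) ->
          is_ulim U (fun n => f (u n)) (Phi f)).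
{ intros f [C HC]; apply epsilon_spec; exact (is_ulim_exists U HU _ C HC). }
assert (HPhi_dual : forall f, in_dual f -> is_ulim U (fun n => f (u n)) (Phi f))
  by (intros f Hf; apply HPhi; exact (dual_bounded_seq f u M Hf Hu)).
destruct (Hrefl Phi) as [x Hx].
- intros f g Hf Hg.
  destruct (dual_bounded_seq f u M Hf Hu) as [Cf HCf].
  destruct (dual_bounded_seq g u M Hg Hu) as [Cg HCg].
  apply (is_ulim_unique U HU (fun n => f (u n) + g (u n))).
  + apply (HPhi (fun y => f y + g y)); exists (Cf + Cg); intros n.
    eapply Rle_trans; [apply Rabs_triang|specialize (HCf n); specialize (HCg n); lra].
  + apply is_ulim_plus; auto.
- intros a f Hf.
  destruct (dual_bounded_seq f u M Hf Hu) as [C HC].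
  apply (is_ulim_unique U HU (fun n => a * f (u n))).
  + apply (HPhi (fun y => a * f y)); exists (Rabs a * C); intros n.
    rewrite Rabs_mult; apply Rmult_le_compat_l; [apply Rabs_pos|apply HC].
  + apply is_ulim_scal; auto.
- exists M; intros f K Hf HK HfK.
  apply (is_ulim_bound U HU (fun n => f (u n))); [apply HPhi_dual, Hf|].
  intros n; eapply Rle_trans; [apply HfK|].
  rewrite Rmult_comm; apply Rmult_le_compat_r; [exact HK|apply Hu].
- exists x; intros f Hf; rewrite <- (Hx f Hf); apply HPhi_dual, Hf.
Qed.

End Steps.

Lemma strictly_increasing_succ (phi : nat -> nat) :
  (forall k, (phi k < phi (S k))%nat) -> strictly_increasing phi.
Proof.
intros H i j Hij; induction Hij as [|j Hij IH]; [apply H|].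
specialize (H j); lia.
Qed.

(* Interleave [u (a j)] with [- u (b j)]: the partial sums at even times are the
   partial sums of the differences, so they stay sublinear. *)
Lemma alternating_of_sublinear_differences {X : NormedSpace} (u : nat -> X) M (a b : nat -> nat) :
  (forall n, vnorm (u n) <= M) ->
  (forall j, (a j < b j)%nat /\ (b j < a (S j))%nat) ->
  sublinear (fun m => vnorm (vsum (fun j => vsub (u (a j)) (u (b j))) m)) ->
  exists phi s, strictly_increasing phi /\ (forall j, s j = 1 \/ s j = -1) /\
    vconvergent (cesaro (fun j => vscal (s j) (u (phi j)))).
Proof.
intros Hu Hab Hsub.
set (phi := fun k => if Nat.even k then a (Nat.div2 k) else b (Nat.div2 k)).
set (s := fun k : nat => if Nat.even k then 1 else -1).
assert (Heven : forall i, phi (2 * i)%nat = a i /\ s (2 * i)%nat = 1).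
{ intros i; unfold phi, s; now rewrite Nat.even_even, Nat.div2_double. }
assert (Hodd : forall i, phi (S (2 * i)) = b i /\ s (S (2 * i)) = -1).
{ intros i; unfold phi, s; rewrite <- Nat.add_1_r, Nat.even_odd, Nat.div2_odd'; auto. }
set (D := vsum (fun j => vsub (u (a j)) (u (b j)))).
set (T := vsum (fun j => vscal (s j) (u (phi j)))).
assert (HTeven : forall i, T (2 * i)%nat = D i).
{ induction i as [|i IH]; [reflexivity|].
  replace (2 * S i)%nat with (S (S (2 * i))) by lia.
  unfold T in *; cbn [vsum]; rewrite IH.
  destruct (Heven i) as [-> ->]; destruct (Hodd i) as [-> ->].
  now rewrite vscal_1, <- vadd_assoc, <- vsubE. }
assert (HTodd : forall i, T (S (2 * i)) = vadd (D i) (u (a i))).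
{ intros i; unfold T; cbn [vsum]; fold (T (2 * i)%nat).
  destruct (Heven i) as [-> ->]; now rewrite HTeven, vscal_1. }
exists phi, s; split; [|split].
- apply strictly_increasing_succ; intros k.
  destruct (Nat.Even_or_Odd k) as [[i ->]|[i ->]]; rewrite ?Nat.add_1_r.
  + rewrite (proj1 (Heven i)), (proj1 (Hodd i)); apply Hab.
  + replace (S (S (2 * i))) with (2 * S i)%nat by lia.
    rewrite (proj1 (Heven (S i))), (proj1 (Hodd i)); apply Hab.
- intros j; unfold s; destruct (Nat.even j); auto.
- exists vzero; apply cesaro_sublinear; fold T; intros eta Heta.
  destruct (Hsub eta Heta) as [A HA].
  exists (A + Rabs M); intros k; pose proof (Rle_abs M); pose proof (Rabs_pos M).
  destruct (Nat.Even_or_Odd k) as [[i ->]|[i ->]]; rewrite ?Nat.add_1_r.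
  + rewrite HTeven; specialize (HA i); fold D in HA.
    assert (eta * INR i <= eta * INR (2 * i))
      by (apply Rmult_le_compat_l; [lra|apply le_INR; lia]); lra.
  + rewrite HTodd; eapply Rle_trans; [apply vnorm_triangle|].
    specialize (HA i); fold D in HA; specialize (Hu (a i)).
    assert (eta * INR i <= eta * INR (S (2 * i)))
      by (apply Rmult_le_compat_l; [lra|apply le_INR; lia]); lra.
Qed.

Theorem aus_alternating_banach_saks (X : NormedSpace) :
  asymptotically_uniformly_smooth X -> alternating_banach_saks X.
Proof.
intros Haus u [M Hu].
destruct free_ultrafilter_exists as [U HU].
destruct (aus_sublinear_walk (difference_steps u) (M + M) Haus) as [Ns [vs [Hsteps Hsub]]].
- intros N N' v [a [b [_ [_ [_ ->]]]]].
  eapply Rle_trans; [apply vnorm_sub_le|pose proof (Hu a); pose proof (Hu b); lra].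
- exact (difference_steps_approach U HU u M Hu).
- assert (Hpairs : forall j, exists p : nat * nat, (Ns j <= fst p)%nat /\ (fst p < snd p)%nat /\
            Ns (S j) = S (snd p) /\ vs j = vsub (u (fst p)) (u (snd p))).
  { intros j; destruct (Hsteps j) as [a [b H]]; now exists (a, b). }
  destruct (choice _ Hpairs) as [p Hp].
  apply (alternating_of_sublinear_differences u M (fun j => fst (p j)) (fun j => snd (p j)) Hu).
  + intros j; destruct (Hp j) as [_ [H1 [H2 _]]]; destruct (Hp (S j)) as [H3 _]; lia.
  + intros eta Heta; destruct (Hsub eta Heta) as [A HA]; exists A; intros k.
    rewrite (vsum_ext _ vs); [apply HA|].
    intros i _; now destruct (Hp i) as [_ [_ [_ ->]]].
Qed.

Theorem aus_reflexive_banach_saks (X : NormedSpace) :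
  asymptotically_uniformly_smooth X -> reflexive X -> banach_saks X.
Proof.
intros Haus Hrefl u [M Hu].
destruct free_ultrafilter_exists as [U HU].
destruct (reflexive_weak_ulim U HU u M Hrefl Hu) as [x Hx].
destruct (aus_sublinear_walk (offset_steps u x) (M + vnorm x) Haus) as [Ns [vs [Hsteps Hsub]]].
- intros N N' v [n [_ [_ ->]]].
  eapply Rle_trans; [apply vnorm_sub_le|pose proof (Hu n); lra].
- exact (offset_steps_approach U HU u x Hx).
- destruct (choice _ Hsteps) as [n Hn]; exists n; split.
  + apply strictly_increasing_succ; intros k.
    destruct (Hn k) as [_ [H1 _]]; destruct (Hn (S k)) as [H2 _]; lia.
  + exists x; apply converges_of_cesaro_sub, cesaro_sublinear.
    intros eta Heta; destruct (Hsub eta Heta) as [A HA]; exists A; intros k.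
    rewrite (vsum_ext _ vs); [apply HA|].
    intros i _; now destruct (Hn i) as [_ [_ ->]].
Qed.

Theorem corollary3p2 (X : BanachSpace) :
  asymptotically_uniformly_smooth X ->
  alternating_banach_saks X /\ (reflexive X -> banach_saks X).
Proof.
intros Haus; split.
- exact (aus_alternating_banach_saks X Haus).
- exact (aus_reflexive_banach_saks X Haus).
Qed.
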